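(* Let $n\ge 1$, let $U$ be a unitary on $n$ qubits (the compute qubits), let $\rho$ be an arbitrary $n$-qubit density matrix, and let $\mathcal{E}(\sigma)=\sum_i E_i\sigma E_i^\dagger$ be an arbitrary noise map acting on the compute qubits only. Then there exist $m\ge 1$ and checks $\tilde C_{1,k},\tilde C_{2,k}$ ($k=1,\dots,m$), i.e. $n$-qubit unitaries satisfying $\tilde C_{2,k}\,U\,\tilde C_{1,k}=U$ for every $k$, such that, whenever the probability of obtaining outcome $0$ on all $m$ ancillas in the $m$-layer Pauli check sandwiching protocol (with noise $\mathcal{E}$ acting immediately after $U$) is nonzero, the postselected state $\rho_m$ of the compute qubits satisfies $F(\rho_m,U\rho U^\dagger)=1$.
   Context: The $m$-layer Pauli check sandwiching protocol: for each $k$, let $C_{j,k}=\tilde C_{j,k}\otimes|1\rangle\langle 1|_k+\mathbb{I}\otimes|0\rangle\langle 0|_k$ ($j=1,2$) be the controlled unitary with control on ancilla $k$ and target the compute qubits. Start with the compute qubits in $\rho$ and $m$ ancillas in $|0\rangle$; apply a Hadamard to every ancilla; apply $C_{1,m},\dots,C_{1,1}$ (in this order); apply $U$ to the compute qubits; apply the noise map $\mathcal{E}$ to the compute qubits; apply $C_{2,1},\dots,C_{2,m}$ (in this order); apply a Hadamard to every ancilla; measure all ancillas in the computational basis and keep only the runs in which every ancilla gives outcome $0$. The postselected state $\rho_m$ is the (renormalized) resulting state of the compute qubits. Fidelity is $F(\rho,\omega)=\left(\operatorname{tr}\sqrt{\sqrt{\rho}\,\omega\sqrt{\rho}}\right)^2$.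 *)

From HB Require Import structures.
From mathcomp Require Import all_boot all_order all_algebra.
From mathcomp Require Import complex mxtens.
From Stdlib Require Import ClassicalEpsilon.

Set Implicit Arguments.
Unset Strict Implicit.
Unset Printing Implicit Defensive.

Import Order.TTheory GRing.Theory Num.Theory.
Local Open Scope ring_scope.

Section Quantum.
Variable R : rcfType.
Local Notation C := (R[i]).

Definition adjmx {p q : nat} (A : 'M[C]_(p, q)) : 'M[C]_(q, p) :=
  map_mx Num.conj (A^T).

Definition qunitary {N : nat} (U : 'M[C]_N) : Prop :=
  adjmx U *m U = 1%:M.

Definition psdmx {N : nat} (A : 'M[C]_N) : Prop :=
  adjmx A = A /\ forall v : 'cV[C]_N, 0 <= (adjmx v *m A *m v) ord0 ord0.

Definition density_matrix {N : nat} (rho : 'M[C]_N) : Prop :=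
  psdmx rho /\ \tr rho = 1.

Definition sqrtmx {N : nat} (A : 'M[C]_N) : 'M[C]_N :=
  epsilon (inhabits 0) (fun S : 'M[C]_N => psdmx S /\ S *m S = A).

Definition fidelity {N : nat} (rho omega : 'M[C]_N) : C :=
  (\tr (sqrtmx (sqrtmx rho *m omega *m sqrtmx rho))) ^+ 2.

(* System = compute register ('I_(2^n)) (x) ancilla register ('I_(2^m)),
   combined with the Kronecker product [*t].  Ancilla k (k : 'I_m; the
   paper's ancilla k+1) is bit k of the ancilla basis index. *)

Definition anc_bit {m : nat} (k : 'I_m) (x : 'I_(2 ^ m)) : bool :=
  odd (x %/ 2 ^ k).

Definition anc_proj {m : nat} (k : 'I_m) (b : bool) : 'M[C]_(2 ^ m) :=
  \matrix_(x, y) ((x == y) && (anc_bit k x == b))%:R.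

Definition anc_zero (m : nat) : 'M[C]_(2 ^ m) :=
  \matrix_(x, y) (((x : nat) == 0%N) && ((y : nat) == 0%N))%:R.

Definition hadamard : 'M[C]_2 :=
  (sqrtC 2)^-1 *: \matrix_(i, j) (if (i == 1 :> 'I_2) && (j == 1 :> 'I_2)
                                  then -1 else 1).

Definition controlled {n m : nat} (k : 'I_m) (Ct : 'M[C]_(2 ^ n))
  : 'M[C]_(2 ^ n * 2 ^ m) :=
  Ct *t anc_proj k true + (1%:M : 'M[C]_(2 ^ n)) *t anc_proj k false.

Definition hadamard_all (n m : nat) : 'M[C]_(2 ^ n * 2 ^ m) :=
  (1%:M : 'M[C]_(2 ^ n)) *t (hadamard ^t m).

Definition conjby {N : nat} (V sigma : 'M[C]_N) : 'M[C]_N :=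
  V *m sigma *m adjmx V.

Definition noise_on_compute {n m K : nat} (E : 'I_K -> 'M[C]_(2 ^ n))
  (sigma : 'M[C]_(2 ^ n * 2 ^ m)) : 'M[C]_(2 ^ n * 2 ^ m) :=
  \sum_(i < K) conjby (E i *t (1%:M : 'M[C]_(2 ^ m))) sigma.

Definition apply_seq {N m : nat} (F : 'I_m -> 'M[C]_N) (s : seq 'I_m)
  (sigma : 'M[C]_N) : 'M[C]_N :=
  foldl (fun st k => conjby (F k) st) sigma s.

Definition protocol_final_state {n m K : nat} (C1 C2 : 'I_m -> 'M[C]_(2 ^ n))
  (U : 'M[C]_(2 ^ n)) (E : 'I_K -> 'M[C]_(2 ^ n)) (rho : 'M[C]_(2 ^ n))
  : 'M[C]_(2 ^ n * 2 ^ m) :=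
  let s0 := rho *t anc_zero m in
  let s1 := conjby (hadamard_all n m) s0 in
  let s2 := apply_seq (fun k => controlled k (C1 k)) (rev (enum 'I_m)) s1 in
  let s3 := conjby (U *t (1%:M : 'M[C]_(2 ^ m))) s2 in
  let s4 := noise_on_compute E s3 in
  let s5 := apply_seq (fun k => controlled k (C2 k)) (enum 'I_m) s4 in
  conjby (hadamard_all n m) s5.

Definition allzero_proj (n m : nat) : 'M[C]_(2 ^ n * 2 ^ m) :=
  (1%:M : 'M[C]_(2 ^ n)) *t anc_zero m.

Definition ptrace_anc {n m : nat} (A : 'M[C]_(2 ^ n * 2 ^ m)) : 'M[C]_(2 ^ n) :=
  \matrix_(a, b) \sum_(x < 2 ^ m) A (mxtens_index (a, x)) (mxtens_index (b, x)).

Definition prob_allzero {n m K : nat} (C1 C2 : 'I_m -> 'M[C]_(2 ^ n))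
  (U : 'M[C]_(2 ^ n)) (E : 'I_K -> 'M[C]_(2 ^ n)) (rho : 'M[C]_(2 ^ n)) : C :=
  \tr (allzero_proj n m *m protocol_final_state C1 C2 U E rho).

Definition postselected_state {n m K : nat} (C1 C2 : 'I_m -> 'M[C]_(2 ^ n))
  (U : 'M[C]_(2 ^ n)) (E : 'I_K -> 'M[C]_(2 ^ n)) (rho : 'M[C]_(2 ^ n))
  : 'M[C]_(2 ^ n) :=
  (prob_allzero C1 C2 U E rho)^-1 *:
    ptrace_anc (conjby (allzero_proj n m) (protocol_final_state C1 C2 U E rho)).

End Quantum.

From HB Require Import structures.
From mathcomp Require Import all_boot all_order all_algebra.
From mathcomp Require Import complex mxtens spectral sesquilinear.
From mathcomp Require Import cyclic separable cyclotomic.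
From Stdlib Require Import ClassicalEpsilon.

Set Implicit Arguments.
Unset Strict Implicit.
Unset Printing Implicit Defensive.

Import Order.TTheory GRing.Theory Num.Theory.
Local Open Scope ring_scope.

(* Take m = 2n ancillas, N = 2^n and the checks C_{1,k} = U^dagger V_k U,
   C_{2,k} = V_k^dagger, where V_k = Z^(2^k) and V_(n+k) = X^(2^k) for k < n
   are powers of the clock and shift matrices; then C_{2,k} U C_{1,k} = U.
   On the ancilla basis state z the compute register undergoes
   W_z^dagger E_i W_z U with W_z = Z^(z mod N) X^(z div N), so after the
   Hadamards and postselection on 0...0 the i-th Kraus operator becomes the
   average N^-2 sum_z W_z^dagger E_i W_z U = (tr E_i / N) U: the Weyl operators
   twirl every matrix to a multiple of the identity.  All surviving Kraus
   operators being proportional to U, the postselected state is exactly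
   U rho U^dagger. *)

Section Adjoint.
Variable R : rcfType.
Local Notation C := (R[i]).

Lemma adjmxK p q (A : 'M[C]_(p, q)) : adjmx (adjmx A) = A.
Proof. by apply/matrixP => i j; rewrite !mxE conjCK. Qed.

Lemma adjmxM p q r (A : 'M[C]_(p, q)) (B : 'M[C]_(q, r)) :
  adjmx (A *m B) = adjmx B *m adjmx A.
Proof. by rewrite /adjmx trmx_mul map_mxM. Qed.

Lemma adjmxB p q (A B : 'M[C]_(p, q)) : adjmx (A - B) = adjmx A - adjmx B.
Proof. by apply/matrixP => i j; rewrite !mxE rmorphB. Qed.

Lemma adjmxZ p q (a : C) (A : 'M[C]_(p, q)) : adjmx (a *: A) = a^* *: adjmx A.
Proof. by apply/matrixP => i j; rewrite !mxE rmorphM. Qed.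

Lemma adjmx1 p : adjmx (1%:M : 'M[C]_p) = 1%:M.
Proof. by rewrite /adjmx trmx1 map_mx1. Qed.

Lemma adjmx_tens p q r s (A : 'M[C]_(p, q)) (B : 'M[C]_(r, s)) :
  adjmx (A *t B) = adjmx A *t adjmx B.
Proof. by rewrite /adjmx trmx_tens map_mxT. Qed.

Lemma adjmx_diag p (d : 'rV[C]_p) : adjmx (diag_mx d) = diag_mx (map_mx Num.conj d).
Proof.
apply/matrixP => i j; rewrite !mxE eq_sym.
by case: eqVneq => [->|_]; rewrite ?mulr1n ?mulr0n ?conjC0.
Qed.

Lemma adjmx_prod p I (r : seq I) (F : I -> 'M[C]_p) :
  adjmx (\prod_(k <- r) F k) = \prod_(k <- rev r) adjmx (F k).
Proof.
elim: r => [|k r IHr]; first by rewrite !big_nil adjmx1.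
by rewrite big_cons rev_cons big_rcons adjmxM IHr.
Qed.

Lemma qunitaryV p (U : 'M[C]_p) : qunitary U -> U *m adjmx U = 1%:M.
Proof. exact: mulmx1C. Qed.

Lemma qunitary_adj p (U : 'M[C]_p) : qunitary U -> qunitary (adjmx U).
Proof. by move=> /qunitaryV; rewrite /qunitary adjmxK. Qed.

Lemma qunitaryM p (U V : 'M[C]_p) : qunitary U -> qunitary V -> qunitary (U *m V).
Proof.
move=> hU hV; rewrite /qunitary adjmxM mulmxA -(mulmxA _ (adjmx U)) hU.
by rewrite mulmx1 hV.
Qed.

Lemma conjby_comp N (X Y S : 'M[C]_N) : conjby X (conjby Y S) = conjby (X *m Y) S.
Proof. by rewrite /conjby adjmxM !mulmxA. Qed.

Lemma conjby_sum N I (r : seq I) (X : 'M[C]_N) (F : I -> 'M[C]_N) :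
  conjby X (\sum_(i <- r) F i) = \sum_(i <- r) conjby X (F i).
Proof. by rewrite /conjby mulmx_sumr mulmx_suml. Qed.

End Adjoint.

Section PsdSqrt.
Variable R : rcfType.
Local Notation C := (R[i]).
Variable N : nat.
Implicit Types A B D H : 'M[C]_N.
Local Open Scope sesquilinear_scope.

Local Notation e_ i := (delta_mx i 0 : 'cV[C]_N).

Lemma quad_delta_mx A i : (adjmx (e_ i) *m A *m e_ i) 0 0 = A i i.
Proof.
have -> : adjmx (e_ i) = delta_mx 0 i.
  by apply/matrixP => j k; rewrite !mxE conjC_nat andbC.
by rewrite -rowE -colE !mxE.
Qed.

Lemma psdmx_diag_ge0 A i : psdmx A -> 0 <= A i i.
Proof. by case=> _ /(_ (e_ i)); rewrite quad_delta_mx. Qed.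

Lemma psdmx_trace_ge0 A : psdmx A -> 0 <= \tr A.
Proof. by move=> psdA; rewrite sumr_ge0 // => i _; apply: psdmx_diag_ge0. Qed.

Lemma psdmx_congr A D : psdmx A -> adjmx D = D -> psdmx (D *m A *m D).
Proof.
move=> [hermA quadA] hermD; split; first by rewrite !adjmxM hermA hermD mulmxA.
by move=> v; have := quadA (D *m v); rewrite adjmxM hermD !mulmxA.
Qed.

Lemma herm_trace_sqr_eq0 H : adjmx H = H -> \tr (H *m H) = 0 -> H = 0.
Proof.
move=> hermH; have -> : \tr (H *m H) = \sum_i \sum_j `|H i j| ^+ 2.
  apply: eq_bigr => i _; rewrite mxE; apply: eq_bigr => j _.
  by rewrite -{2}hermH !mxE -normCK.
move/eqP; rewrite psumr_eq0 => [/allP H0|i _]; last first.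
  by rewrite sumr_ge0 // => j _; rewrite exprn_ge0.
apply/matrixP => i j; rewrite mxE.
move: (H0 i (mem_index_enum _)); rewrite /= psumr_eq0 => [/allP|k _]; last first.
  by rewrite exprn_ge0.
by move/(_ j (mem_index_enum _)); rewrite sqrf_eq0 normr_eq0 => /eqP.
Qed.

Lemma psdmx_sqrt_exists A : psdmx A -> exists S, psdmx S /\ S *m S = A.
Proof.
move=> [hermA quadA].
have /orthomx_spectralP AE : A \is normalmx.
  by apply/normalmxP; rewrite -[A^t*]/(adjmx A) hermA.
move: AE; set P := spectralmx A; set d := spectral_diag A.
have Pu : P \is unitarymx := spectral_unitarymx A.
rewrite invmx_unitary // -[P^t*]/(adjmx P) => AE.
have PPadj : P *m adjmx P = 1%:M := unitarymxP Pu.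
have d_ge0 i : 0 <= d 0 i.
  have PAP : P *m A *m adjmx P = diag_mx d.
    by rewrite AE !mulmxA PPadj mul1mx -mulmxA PPadj mulmx1.
  have := quadA (adjmx P *m e_ i).
  by rewrite adjmxM adjmxK !mulmxA -(mulmxA _ P) -(mulmxA _ (P *m A)) PAP
    quad_delta_mx mxE eqxx mulr1n.
pose s := \row_i sqrtC (d 0 i).
have hermDs : adjmx (diag_mx s) = diag_mx s.
  by rewrite adjmx_diag; congr diag_mx; apply/rowP => i; rewrite !mxE geC0_conj ?sqrtC_ge0.
exists (adjmx P *m diag_mx s *m P); split; first split.
- by rewrite !adjmxM adjmxK hermDs mulmxA.
- move=> v; rewrite !mulmxA -adjmxM -(mulmxA _ P) mul_mx_diag mxE sumr_ge0 // => j _.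
  by rewrite !mxE mulrC mulrA -normCK mulr_ge0 ?exprn_ge0 ?sqrtC_ge0.
rewrite !mulmxA -[_ *m P *m adjmx P]mulmxA PPadj mulmx1.
rewrite -[_ *m diag_mx s *m diag_mx s]mulmxA mulmx_diag AE.
by congr (_ *m diag_mx _ *m _); apply/rowP => i; rewrite !mxE -expr2 sqrtCK.
Qed.

Lemma psdmx_trace_eq0 A : psdmx A -> \tr A = 0 -> A = 0.
Proof.
move=> psdA; have [S [[hermS _] <-]] := psdmx_sqrt_exists psdA.
by move=> /(herm_trace_sqr_eq0 hermS) ->; rewrite mul0mx.
Qed.

(* With D := A - B one has A D = - D B, so tr (D A D) = - tr (D B D); both
   traces are nonnegative, hence D A D = D B D = 0, so D^3 = 0 and D = 0. *)
Lemma psdmx_sqrt_uniq A B : psdmx A -> psdmx B -> A *m A = B *m B -> A = B.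
Proof.
move=> psdA psdB AABB; apply/eqP; rewrite -subr_eq0; apply/eqP.
set D := A - B.
have hermD : adjmx D = D by rewrite adjmxB psdA.1 psdB.1.
have ADE : A *m D = - (D *m B).
  by rewrite mulmxBr mulmxBl AABB opprB.
have psdDAD := psdmx_congr psdA hermD; have psdDBD := psdmx_congr psdB hermD.
have trE : \tr (D *m A *m D) = - \tr (D *m B *m D).
  by rewrite -mulmxA mxtrace_mulC ADE mulNmx raddfN.
have trDAD : \tr (D *m A *m D) = 0.
  apply/le_anti; rewrite psdmx_trace_ge0 // andbT trE oppr_le0.
  exact: psdmx_trace_ge0.
have trDBD : \tr (D *m B *m D) = 0 by apply/eqP; rewrite -oppr_eq0 -trE trDAD.
have D3 : D *m D *m D = 0.
  have -> : D *m D *m D = D *m A *m D - D *m B *m D by rewrite -mulmxBl -mulmxBr.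
  by rewrite (psdmx_trace_eq0 psdDAD trDAD) (psdmx_trace_eq0 psdDBD trDBD) subrr.
have D2 : D *m D = 0.
  by apply: herm_trace_sqr_eq0; rewrite ?adjmxM ?hermD // mulmxA D3 mul0mx mxtrace0.
by apply: herm_trace_sqr_eq0; rewrite // D2 mxtrace0.
Qed.

Lemma sqrtmxP A : psdmx A -> psdmx (sqrtmx A) /\ sqrtmx A *m sqrtmx A = A.
Proof. by move=> psdA; apply: (epsilon_spec _ _ (psdmx_sqrt_exists psdA)). Qed.

Lemma fidelity_refl (rho : 'M[C]_N) : density_matrix rho -> fidelity rho rho = 1.
Proof.
move=> [psdrho tr_rho]; rewrite /fidelity.
have [psdS SS] := sqrtmxP psdrho; set S := sqrtmx rho in psdS SS *.
have [psdT TT] := sqrtmxP (psdmx_congr psdrho psdS.1).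
have -> : sqrtmx (S *m rho *m S) = rho.
  by apply: psdmx_sqrt_uniq => //; rewrite TT -SS !mulmxA.
by rewrite tr_rho expr1n.
Qed.

Lemma density_matrix_conjby (U rho : 'M[C]_N) : qunitary U -> density_matrix rho ->
  density_matrix (conjby U rho).
Proof.
move=> unitU [[hermrho quadrho] tr_rho]; split; first split.
- by rewrite /conjby !adjmxM adjmxK hermrho mulmxA.
- by move=> v; have := quadrho (adjmx U *m v); rewrite /conjby adjmxM adjmxK !mulmxA.
by rewrite /conjby mxtrace_mulC mulmxA unitU mul1mx.
Qed.

End PsdSqrt.

Lemma sum_mxtens_index (V : nmodType) p q (F : 'I_(p * q) -> V) :
  \sum_k F k = \sum_(a < p) \sum_(x < q) F (mxtens_index (a, x)).
Proof.
rewrite pair_big /= (reindex (@mxtens_index p q)) /=; first by apply: eq_bigr => -[].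
by exists (@mxtens_unindex p q) => k _; rewrite (mxtens_indexK, mxtens_unindexK).
Qed.

Section TensorBlocks.
Variable R : rcfType.
Local Notation C := (R[i]).
Variables p q : nat.
Implicit Types A B : 'M[C]_(p * q).

Definition tblk (x y : 'I_q) A : 'M[C]_p :=
  \matrix_(a, b) A (mxtens_index (a, x)) (mxtens_index (b, y)).

Lemma tblk_mul x y A B : tblk x y (A *m B) = \sum_z tblk x z A *m tblk z y B.
Proof.
apply/matrixP => a b; rewrite !mxE summxE sum_mxtens_index exchange_big /=.
by apply: eq_bigr => z _; rewrite !mxE; apply: eq_bigr => c _; rewrite !mxE.
Qed.

Lemma tblk_tens x y (A : 'M[C]_p) (B : 'M[C]_q) : tblk x y (A *t B) = B x y *: A.
Proof. by apply/matrixP => a b; rewrite mxE tensmxE mxE mulrC. Qed.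

Lemma tblkD x y A B : tblk x y (A + B) = tblk x y A + tblk x y B.
Proof. by apply/matrixP => a b; rewrite !mxE. Qed.

Lemma tblk_sum x y I (r : seq I) (P : pred I) (F : I -> 'M[C]_(p * q)) :
  tblk x y (\sum_(i <- r | P i) F i) = \sum_(i <- r | P i) tblk x y (F i).
Proof. by apply/matrixP => a b; rewrite !mxE !summxE; apply: eq_bigr => i _; rewrite mxE. Qed.

Lemma tblk_adj x y A : tblk x y (adjmx A) = adjmx (tblk y x A).
Proof. by apply/matrixP => a b; rewrite !mxE. Qed.

Lemma tblk_trace A : \tr A = \sum_x \tr (tblk x x A).
Proof.
rewrite /mxtrace sum_mxtens_index exchange_big /=.
by apply: eq_bigr => x _; apply: eq_bigr => a _; rewrite mxE.
Qed.

Lemma tensmx11 : (1%:M : 'M[C]_p) *t (1%:M : 'M[C]_q) = 1%:M.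
Proof.
apply/matrixP => i j.
case: (mxtens_indexP i) => a x; case: (mxtens_indexP j) => b y.
rewrite tensmxE !mxE (inj_eq (can_inj (@mxtens_indexK p q))) xpair_eqE.
by rewrite -natrM mulnb.
Qed.

Definition tblk_diag A (f : 'I_q -> 'M[C]_p) :=
  forall x y, tblk x y A = (x == y)%:R *: f x.

Lemma tblk_diag_mul A B f g : tblk_diag A f -> tblk_diag B g ->
  tblk_diag (A *m B) (fun x => f x *m g x).
Proof.
move=> hA hB x y; rewrite tblk_mul (bigD1 x) //= big1 ?addr0.
  by rewrite hA hB eqxx scale1r -scalemxAr.
by move=> z zx; rewrite hA eq_sym (negbTE zx) scale0r mul0mx.
Qed.

Lemma tblk_diag_tens1 (A : 'M[C]_p) : tblk_diag (A *t (1%:M : 'M[C]_q)) (fun _ => A).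
Proof. by move=> x y; rewrite tblk_tens mxE. Qed.

Lemma tblk_diag_prod I (r : seq I) (F : I -> 'M[C]_(p * q)) f :
  (forall k, tblk_diag (F k) (f k)) ->
  tblk_diag (\prod_(k <- r) F k) (fun x => \prod_(k <- r) f k x).
Proof.
move=> hF; elim: r => [|k r IHr] x y; rewrite ?big_nil ?big_cons.
  by have := tblk_diag_tens1 (1%:M : 'M[C]_p) x y; rewrite tensmx11 => h; exact: h.
exact: (tblk_diag_mul (hF k) IHr x y).
Qed.

End TensorBlocks.

Lemma exp2n_gt0 m : (0 < 2 ^ m)%N.
Proof. by rewrite expn_gt0. Qed.

Definition anc0 m : 'I_(2 ^ m) := Ordinal (exp2n_gt0 m).

Section Protocol.
Variable R : rcfType.
Local Notation C := (R[i]).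
Variables n m : nat.
Local Notation cmp := (2 ^ n)%N.
Local Notation anc := (2 ^ m)%N.
Local Notation tblk00 := (@tblk R cmp anc (anc0 m) (anc0 m)).

Lemma apply_seq_prod N (F : 'I_m -> 'M[C]_N) (s : seq 'I_m) S :
  apply_seq F s S = conjby (\prod_(k <- rev s) F k) S.
Proof.
elim: s S => [|k s IHs] S.
  by rewrite big_nil /apply_seq /conjby adjmx1 mul1mx mulmx1.
by rewrite /apply_seq /= -/(apply_seq F s _) IHs conjby_comp rev_cons big_rcons.
Qed.

Lemma tblk_diag_controlled k (Ct : 'M[C]_cmp) :
  tblk_diag (controlled k Ct) (fun x : 'I_anc => if anc_bit k x then Ct else 1%:M).
Proof.
move=> x y; rewrite /controlled tblkD !tblk_tens !mxE.
case: eqVneq => [->|_]; last by rewrite !scale0r addr0.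
by case: (anc_bit k y); rewrite ?scale1r ?scale0r ?addr0 ?add0r.
Qed.

Lemma anc_zeroE x y : anc_zero R m x y = ((x == anc0 m) && (y == anc0 m))%:R.
Proof. by rewrite mxE. Qed.

(* The whole circuit with the noise replaced by its i-th Kraus operator; its
   ancilla block (0, 0) is the i-th Kraus operator of the postselected channel. *)
Definition kraus_op K (C1 C2 : 'I_m -> 'M[C]_cmp) (U : 'M[C]_cmp)
    (E : 'I_K -> 'M[C]_cmp) (i : 'I_K) : 'M[C]_(cmp * anc) :=
  hadamard_all R n m *m \prod_(k <- rev (enum 'I_m)) controlled k (C2 k)
  *m (E i *t 1%:M) *m (U *t 1%:M)
  *m \prod_(k <- enum 'I_m) controlled k (C1 k) *m hadamard_all R n m.

Lemma protocol_final_stateE K C1 C2 U (E : 'I_K -> 'M[C]_cmp) rho :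
  protocol_final_state C1 C2 U E rho =
  \sum_i conjby (kraus_op C1 C2 U E i) (rho *t anc_zero R m).
Proof.
rewrite /protocol_final_state /noise_on_compute !apply_seq_prod revK.
by rewrite !conjby_sum; apply: eq_bigr => i _; rewrite !conjby_comp.
Qed.

Lemma tblk00_conjby_input (A : 'M[C]_(cmp * anc)) rho :
  tblk00 (conjby A (rho *t anc_zero R m)) = conjby (tblk00 A) rho.
Proof.
have tblkA z : tblk (anc0 m) z (A *m (rho *t anc_zero R m)) =
    (z == anc0 m)%:R *: (tblk00 A *m rho).
  rewrite tblk_mul (bigD1 (anc0 m)) //= big1 ?addr0 => [|w /negbTE w0].
    by rewrite tblk_tens anc_zeroE eqxx /= -scalemxAr.
  by rewrite tblk_tens anc_zeroE w0 scale0r mulmx0.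
rewrite /conjby tblk_mul (bigD1 (anc0 m)) //= big1 ?addr0 => [|z /negbTE z0].
  by rewrite tblkA eqxx scale1r tblk_adj.
by rewrite tblkA z0 scale0r mul0mx.
Qed.

Lemma tblk_allzero_projl (G : 'M[C]_(cmp * anc)) x y :
  tblk x y (allzero_proj R n m *m G) = (x == anc0 m)%:R *: tblk (anc0 m) y G.
Proof.
rewrite tblk_mul (bigD1 (anc0 m)) //= big1 ?addr0 => [|z /negbTE z0].
  by rewrite tblk_tens anc_zeroE eqxx andbT -scalemxAl mul1mx.
by rewrite tblk_tens anc_zeroE z0 andbF scale0r mul0mx.
Qed.

Lemma tblk_allzero_projr (G : 'M[C]_(cmp * anc)) x y :
  tblk x y (G *m allzero_proj R n m) = (y == anc0 m)%:R *: tblk x (anc0 m) G.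
Proof.
rewrite tblk_mul (bigD1 (anc0 m)) //= big1 ?addr0 => [|z /negbTE z0].
  by rewrite tblk_tens anc_zeroE eqxx -scalemxAr mulmx1.
by rewrite tblk_tens anc_zeroE z0 scale0r mulmx0.
Qed.

Lemma adjmx_allzero_proj : adjmx (allzero_proj R n m) = allzero_proj R n m.
Proof.
rewrite /allzero_proj adjmx_tens adjmx1; congr (_ *t _).
by apply/matrixP => x y; rewrite !mxE conjC_nat andbC.
Qed.

Lemma prob_allzeroE K C1 C2 U (E : 'I_K -> 'M[C]_cmp) rho :
  prob_allzero C1 C2 U E rho = \tr (tblk00 (protocol_final_state C1 C2 U E rho)).
Proof.
rewrite /prob_allzero tblk_trace (bigD1 (anc0 m)) //= big1 ?addr0 => [|x /negbTE x0].
  by rewrite tblk_allzero_projl eqxx scale1r.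
by rewrite tblk_allzero_projl x0 scale0r mxtrace0.
Qed.

Lemma ptrace_ancE (A : 'M[C]_(cmp * anc)) : ptrace_anc A = \sum_x tblk x x A.
Proof.
by apply/matrixP => a b; rewrite !mxE summxE; apply: eq_bigr => x _; rewrite mxE.
Qed.

Lemma postselected_stateE K C1 C2 U (E : 'I_K -> 'M[C]_cmp) rho :
  postselected_state C1 C2 U E rho =
  (prob_allzero C1 C2 U E rho)^-1 *: tblk00 (protocol_final_state C1 C2 U E rho).
Proof.
rewrite /postselected_state /conjby adjmx_allzero_proj; congr (_ *: _).
rewrite ptrace_ancE (bigD1 (anc0 m)) //= big1 ?addr0 => [|x /negbTE x0].
  by rewrite tblk_allzero_projr tblk_allzero_projl eqxx !scale1r.
by rewrite tblk_allzero_projr x0 scale0r.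
Qed.

Lemma ntensmx_edge (A : 'M[C]_2) c :
  (forall i j : 'I_2, (val i = 0 \/ val j = 0)%N -> A i j = c) ->
  forall k (i j : 'I_(2 ^ k)), (val i = 0 \/ val j = 0)%N -> (A ^t k) i j = c ^+ k.
Proof.
move=> edgeA [|k] i j ij0.
  by rewrite ntensmx0 expr0 mxE; move: i j {ij0} => [[|?] ?] [[|?] ?].
elim: k i j ij0 => [|k IHk] i j ij0; first by rewrite expr1; apply: edgeA.
rewrite /= mxE exprS; congr (_ * _).
  by apply: edgeA => /=; case: ij0 => ->; rewrite div0n; [left|right].
by apply: IHk => /=; case: ij0 => ->; rewrite mod0n; [left|right].
Qed.

Lemma hadamard_edge (i j : 'I_2) :
  (val i = 0 \/ val j = 0)%N -> hadamard R i j = (sqrtC 2)^-1.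
Proof.
move=> ij0; rewrite !mxE; suff -> : (i == 1) && (j == 1) = false by rewrite mulr1.
by case: ij0 => ij0; rewrite -!val_eqE /= ij0 ?andbF.
Qed.

Lemma tblk00_hadamard_all_sandwich (X : 'M[C]_(cmp * anc)) D : tblk_diag X D ->
  tblk00 (hadamard_all R n m *m X *m hadamard_all R n m) = (2 ^ m)%:R^-1 *: \sum_z D z.
Proof.
move=> diagX; have Hm := ntensmx_edge hadamard_edge.
have -> : (2 ^ m)%:R^-1 = (sqrtC 2)^-1 ^+ m * (sqrtC 2)^-1 ^+ m :> C.
  by rewrite -exprMn -invfM -expr2 sqrtCK natrX exprVn.
rewrite tblk_mul scaler_sumr; apply: eq_bigr => z _.
rewrite tblk_mul (bigD1 z) //= big1 ?addr0 => [|w /negbTE wz]; last first.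
  by rewrite diagX wz scale0r mulmx0.
rewrite diagX eqxx scale1r /hadamard_all !tblk_tens !Hm /=; try by [left|right].
by rewrite -scalemxAl mul1mx -scalemxAr mulmx1 scalerA.
Qed.

Lemma tblk00_kraus_op K C1 C2 U (E : 'I_K -> 'M[C]_cmp) i :
  tblk00 (kraus_op C1 C2 U E i) = (2 ^ m)%:R^-1 *: \sum_z
    (\prod_(k <- rev (enum 'I_m)) (if anc_bit k z then C2 k else 1%:M)
     *m E i *m U *m \prod_(k <- enum 'I_m) (if anc_bit k z then C1 k else 1%:M)).
Proof.
have -> : kraus_op C1 C2 U E i = hadamard_all R n m *m
    (\prod_(k <- rev (enum 'I_m)) controlled k (C2 k) *m (E i *t 1%:M) *m (U *t 1%:M)
     *m \prod_(k <- enum 'I_m) controlled k (C1 k)) *m hadamard_all R n m.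
  by rewrite /kraus_op !mulmxA.
apply: tblk00_hadamard_all_sandwich.
apply: tblk_diag_mul; last exact: tblk_diag_prod (fun k => tblk_diag_controlled k (C1 k)).
apply: tblk_diag_mul; last exact: tblk_diag_tens1.
apply: tblk_diag_mul; last exact: tblk_diag_tens1.
exact: tblk_diag_prod (fun k => tblk_diag_controlled k (C2 k)).
Qed.

Lemma postselected_state_scalar_kraus K C1 C2 U (E : 'I_K -> 'M[C]_cmp) rho
    (c : 'I_K -> C) :
  qunitary U -> density_matrix rho ->
  (forall i, tblk00 (kraus_op C1 C2 U E i) = c i *: U) ->
  prob_allzero C1 C2 U E rho != 0 ->
  postselected_state C1 C2 U E rho = conjby U rho.
Proof.
move=> unitU rho_dm krausE p_neq0.
have final00 : tblk00 (protocol_final_state C1 C2 U E rho) =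
    (\sum_i c i * (c i)^*) *: conjby U rho.
  rewrite protocol_final_stateE tblk_sum scaler_suml; apply: eq_bigr => i _.
  by rewrite tblk00_conjby_input krausE /conjby adjmxZ -scalemxAr -!scalemxAl scalerA mulrC.
have probE : prob_allzero C1 C2 U E rho = \sum_i c i * (c i)^*.
  by rewrite prob_allzeroE final00 mxtraceZ (density_matrix_conjby unitU rho_dm).2 mulr1.
by rewrite postselected_stateE final00 -probE scalerA mulVf ?scale1r.
Qed.

End Protocol.

Lemma unity_root_sum_eq0 (F : idomainType) N (xi : F) :
  xi ^+ N = 1 -> xi != 1 -> \sum_(a < N) xi ^+ a = 0.
Proof.
move=> xiN xi_neq1; have /esym/eqP := subrX1 xi N.
by rewrite xiN subrr mulf_eq0 subr_eq0 (negbTE xi_neq1) => /eqP.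
Qed.

Section WeylOperators.
Variable R : rcfType.
Local Notation C := (R[i]).
Variable N : nat.
Hypothesis N_gt0 : (0 < N)%N.

Lemma sum_ord_eq_nat (c : nat) (hc : (c < N)%N) (G : 'I_N -> C) :
  \sum_(y < N) ((val y == c)%:R * G y) = G (Ordinal hc).
Proof.
rewrite (bigD1 (Ordinal hc)) //= eqxx mul1r big1 ?addr0 // => y yc.
suff /negbTE -> : val y != c by rewrite mul0r.
by apply: contra yc => /eqP yc; apply/eqP/val_inj.
Qed.

Lemma eq_addn_mod_sym (u v : 'I_N) s :
  (val u == (v + s) %% N)%N = (val v == (u + (N - s %% N)) %% N)%N.
Proof.
have sN : (s %% N <= N)%N by rewrite ltnW // ltn_mod.
rewrite -(modnDmr v s); apply/eqP/eqP => ->.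
  by rewrite modnDml -addnA subnKC // modnDr modn_small.
by rewrite modnDml -addnA addnC subnK // modnDl modn_small.
Qed.

Lemma addn_subn_modK (u : 'I_N) s : (((u + (N - s %% N)) %% N + s) %% N)%N = u.
Proof.
have hc : ((u + (N - s %% N)) %% N < N)%N by rewrite ltn_mod.
by have := eq_addn_mod_sym u (Ordinal hc) s; rewrite /= eqxx => /eqP <-.
Qed.

Definition shiftmx (s : nat) : 'M[C]_N := \matrix_(x, y) ((val y == (x + s) %% N)%N)%:R.

Lemma shiftmx0 : shiftmx 0 = 1%:M.
Proof. by apply/matrixP => x y; rewrite !mxE addn0 modn_small // eq_sym. Qed.

Lemma shiftmxD s t : shiftmx s *m shiftmx t = shiftmx (s + t).
Proof.
apply/matrixP => x v; rewrite !mxE.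
have hc : ((x + s) %% N < N)%N by rewrite ltn_mod.
under eq_bigr => y _ do rewrite !mxE.
by rewrite sum_ord_eq_nat /= modnDml addnA.
Qed.

Lemma shiftmx_unitary s : qunitary (shiftmx s).
Proof.
apply/matrixP => u v; rewrite !mxE.
have hc : ((u + (N - s %% N)) %% N < N)%N by rewrite ltn_mod.
under eq_bigr => p _ do rewrite !mxE conjC_nat eq_addn_mod_sym.
by rewrite sum_ord_eq_nat /= addn_subn_modK eq_sym.
Qed.

Lemma shiftmx_twirl_diag (d : 'rV[C]_N) :
  \sum_(b < N) adjmx (shiftmx b) *m diag_mx d *m shiftmx b = (\sum_p d 0 p) *: 1%:M.
Proof.
apply/matrixP => u v; rewrite summxE !mxE mulr_suml.
under eq_bigr => b _ do rewrite mul_mx_diag mxE.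
under eq_bigr => b _ do under eq_bigr => p _ do rewrite !mxE conjC_nat.
rewrite exchange_big /=; apply: eq_bigr => p _.
have hc : ((u + (N - p %% N)) %% N < N)%N by rewrite ltn_mod.
under eq_bigr => b _ do rewrite [(p + b)%N]addnC eq_addn_mod_sym mulrAC -mulrA.
by rewrite sum_ord_eq_nat /= addn_subn_modK mulrC eq_sym.
Qed.

Variable w : C.
Hypothesis w_prim : N.-primitive_root w.

Definition clockmx (s : nat) : 'M[C]_N := diag_mx (\row_(x < N) w ^+ (x * s)).

Lemma clockmx0 : clockmx 0 = 1%:M.
Proof. by apply/matrixP => x y; rewrite !mxE muln0 expr0. Qed.

Lemma clockmxD s t : clockmx s *m clockmx t = clockmx (s + t).
Proof.
by rewrite mulmx_diag; congr diag_mx; apply/rowP => x; rewrite !mxE -exprD mulnDr.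
Qed.

Lemma mul_conj_prim_rootX k : (w ^+ k)^* * w ^+ k = 1.
Proof.
have normw : `|w| = 1.
  by apply/eqP; rewrite -(pexpr_eq1 N_gt0) // -normrX (prim_expr_order w_prim) normr1.
by rewrite -normCKC normrX normw !expr1n.
Qed.

Lemma clockmx_unitary s : qunitary (clockmx s).
Proof.
rewrite /qunitary adjmx_diag mulmx_diag; apply/matrixP => x y.
by rewrite !mxE mul_conj_prim_rootX.
Qed.

Lemma clockmx_twirl (A : 'M[C]_N) :
  \sum_(a < N) adjmx (clockmx a) *m A *m clockmx a = N%:R *: diag_mx (\row_p A p p).
Proof.
apply/matrixP => u v; rewrite summxE !mxE.
under eq_bigr => a _ do rewrite adjmx_diag mul_diag_mx mul_mx_diag !mxE.
pose xi := (w ^+ u)^* * w ^+ v.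
have -> : \sum_(a < N) ((w ^+ (u * a))^* * A u v * w ^+ (v * a)) =
          A u v * \sum_(a < N) xi ^+ a.
  rewrite mulr_sumr; apply: eq_bigr => a _.
  by rewrite /xi exprMn -rmorphXn -!exprM mulrAC mulrC.
rewrite eq_sym; have [vu|vu] := eqVneq v u.
  have -> : xi = 1 by rewrite /xi vu mul_conj_prim_rootX.
  rewrite vu mulr1n (eq_bigr (fun _ => 1)) => [|a _]; last first.
    by rewrite expr1n.
  by rewrite sumr_const card_ord mulrC.
rewrite mulr0n unity_root_sum_eq0 ?mulr0 //.
  rewrite /xi exprMn -rmorphXn -!exprM mulnC exprM (prim_expr_order w_prim) expr1n.
  by rewrite mulnC exprM (prim_expr_order w_prim) expr1n rmorph1 mulr1.
apply: contra vu => /eqP xi1; apply/eqP.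
have /eqP : w ^+ v = w ^+ u.
  by rewrite -[w ^+ v]mul1r -(mul_conj_prim_rootX u) mulrAC -/xi xi1 mul1r.
by rewrite (eq_prim_root_expr w_prim) !modn_small // => /eqP /val_inj.
Qed.

End WeylOperators.

Lemma modn_exp2S z k : (z %% 2 ^ k.+1 = z %% 2 ^ k + odd (z %/ 2 ^ k) * 2 ^ k)%N.
Proof.
rewrite {1}(divn_eq (z %% 2 ^ k.+1) (2 ^ k)) addnC; congr (_ + _)%N.
  by rewrite modn_dvdm // dvdn_exp2l.
by rewrite expnS -modn_divl modn2.
Qed.

Lemma prod_iota_bits (T : pzSemiRingType) (A : nat -> T) :
  A 0%N = 1 -> (forall s t, A s * A t = A (s + t)%N) ->
  forall z k, \prod_(j <- iota 0 k) (if odd (z %/ 2 ^ j) then A (2 ^ j)%N else 1)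
              = A (z %% 2 ^ k)%N.
Proof.
move=> A0 AD z; elim=> [|k IHk]; first by rewrite big_nil modn1 A0.
rewrite -[k.+1]addn1 iotaD big_cat IHk /= big_cons big_nil mulr1 addn1 modn_exp2S.
by case: (odd _); rewrite ?mulr1 ?addn0 // AD mul1n.
Qed.

Lemma prim_root_exists (F : numClosedFieldType) N :
  (0 < N)%N -> exists w : F, N.-primitive_root w.
Proof.
pose p : {poly F} := 'X^N - 1; have [r Dp] := closed_field_poly_normal p.
move=> N_gt0; rewrite (monicP _) ?monicXnsubC // scale1r in Dp.
have rN1 : all N.-unity_root r by apply/allP => z; rewrite -root_prod_XsubC -Dp.
have sz_r : (N < (size r).+1)%N.
  by rewrite -(size_prod_XsubC r id) -Dp size_XnsubC.
have [|w] := hasP (has_prim_root N_gt0 rN1 _ sz_r); last by exists w.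
by rewrite -separable_prod_XsubC -Dp separable_Xn_sub_1 // pnatr_eq0 -lt0n.
Qed.

Section WeylChecks.
Variable R : rcfType.
Local Notation C := (R[i]).
Variable n : nat.
Local Notation N := (2 ^ n)%N.
Variable w : C.
Hypothesis w_prim : N.-primitive_root w.

Definition weyl_check (k : nat) : 'M[C]_N :=
  if (k < n)%N then clockmx N w (2 ^ k) else shiftmx R N (2 ^ (k - n)).

Definition weyl_op (z : 'I_(2 ^ (n + n))) : 'M[C]_N :=
  \prod_(k <- enum 'I_(n + n)) (if anc_bit k z then weyl_check k else 1%:M).

Lemma weyl_check_unitary k : qunitary (weyl_check k).
Proof.
rewrite /weyl_check; case: ifP => _.
  exact: (clockmx_unitary (exp2n_gt0 n) w_prim).
exact: (shiftmx_unitary R (exp2n_gt0 n)).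
Qed.

Lemma weyl_opE z : weyl_op z = clockmx N w (z %% N) *m shiftmx R N (z %/ N %% N).
Proof.
rewrite /weyl_op.
rewrite -(big_map val predT (fun k => if odd (z %/ 2 ^ k) then weyl_check k else 1)).
rewrite val_enum_ord iotaD big_cat add0n /=; congr (_ *m _).
  rewrite -(prod_iota_bits (clockmx0 N w) (clockmxD N w)).
  by apply: eq_big_seq => j; rewrite mem_iota add0n /weyl_check => /= ->.
have -> : iota n n = map (addn n) (iota 0 n) by rewrite -iotaDl addn0.
rewrite big_map -(prod_iota_bits (shiftmx0 R N) (shiftmxD R (exp2n_gt0 n))).
apply: eq_big_seq => j _.
by rewrite /weyl_check ltnNge leq_addr /= addKn (expnD 2 n j) divnMA.
Qed.

(* Twirling by the clock matrices dephases A; the shifts then average its diagonal. *)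
Lemma weyl_twirl (A : 'M[C]_N) :
  \sum_z adjmx (weyl_op z) *m A *m weyl_op z = (N%:R * \tr A) *: 1%:M.
Proof.
pose G z := adjmx (clockmx N w (z %% N) *m shiftmx R N (z %/ N %% N)) *m A *m
  (clockmx N w (z %% N) *m shiftmx R N (z %/ N %% N)).
under eq_bigr => z _ do rewrite weyl_opE -/(G z).
rewrite -(big_mkord xpredT G) expnD big_mkord sum_mxtens_index /=.
have -> : \sum_(b < N) \sum_(a < N) G (b * N + a)%N =
    \sum_(b < N) adjmx (shiftmx R N b) *m
      (\sum_(a < N) adjmx (clockmx N w a) *m A *m clockmx N w a) *m shiftmx R N b.
  apply: eq_bigr => b _; rewrite mulmx_sumr mulmx_suml; apply: eq_bigr => a _.
  rewrite /G modnMDl modn_small // divnMDl ?exp2n_gt0 // divn_small // addn0.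
  by rewrite modn_small // adjmxM !mulmxA.
rewrite (clockmx_twirl (exp2n_gt0 n) w_prim).
under eq_bigr => b _ do rewrite -scalemxAr -scalemxAl.
rewrite -scaler_sumr (shiftmx_twirl_diag (exp2n_gt0 n)) scalerA.
by congr ((_ * _) *: _); apply: eq_bigr => p _; rewrite mxE.
Qed.

End WeylChecks.

Section SandwichChecks.
Variable R : rcfType.
Local Notation C := (R[i]).
Variables (n : nat) (w : C).
Hypothesis w_prim : (2 ^ n).-primitive_root w.
Variable U : 'M[C]_(2 ^ n).
Hypothesis unitU : qunitary U.

Definition left_check (k : 'I_(n + n)) := adjmx U *m weyl_check n w k *m U.
Definition right_check (k : 'I_(n + n)) := adjmx (weyl_check n w k).

Lemma sandwich_checksP k :
  [/\ qunitary (left_check k), qunitary (right_check k)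
    & right_check k *m U *m left_check k = U].
Proof.
have unitV := weyl_check_unitary w_prim k; have unitU' := qunitaryV unitU.
split; rewrite /left_check /right_check.
- exact: qunitaryM (qunitaryM (qunitary_adj unitU) unitV) unitU.
- exact: qunitary_adj unitV.
by rewrite !mulmxA -(mulmxA _ U) unitU' mulmx1 unitV mul1mx.
Qed.

Lemma prod_left_check (b : 'I_(n + n) -> bool) :
  \prod_(k <- enum 'I_(n + n)) (if b k then left_check k else 1%:M) =
  adjmx U *m \prod_(k <- enum 'I_(n + n)) (if b k then weyl_check n w k else 1%:M) *m U.
Proof.
elim: (enum _) => [|k s IHs]; first by rewrite !big_nil mulmx1 unitU.
rewrite !big_cons -!mulmxE IHs; case: (b k); last by rewrite !mul1mx.
by rewrite /left_check !mulmxA -(mulmxA _ U) (qunitaryV unitU) mulmx1.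
Qed.

Lemma prod_right_check (z : 'I_(2 ^ (n + n))) :
  \prod_(k <- rev (enum 'I_(n + n))) (if anc_bit k z then right_check k else 1%:M) =
  adjmx (weyl_op w z).
Proof.
rewrite /weyl_op adjmx_prod; apply: eq_bigr => k _.
by case: (anc_bit k z); rewrite ?adjmx1.
Qed.

Lemma tblk00_kraus_op_sandwich K (E : 'I_K -> 'M[C]_(2 ^ n)) i :
  tblk (anc0 (n + n)) (anc0 (n + n)) (kraus_op left_check right_check U E i) =
  ((2 ^ (n + n))%:R^-1 * ((2 ^ n)%:R * \tr (E i))) *: U.
Proof.
rewrite tblk00_kraus_op -scalerA; congr (_ *: _).
have -> : ((2 ^ n)%:R * \tr (E i)) *: U =
    (\sum_z adjmx (weyl_op w z) *m E i *m weyl_op w z) *m U.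
  by rewrite (weyl_twirl w_prim) -scalemxAl mul1mx.
rewrite mulmx_suml; apply: eq_bigr => z _.
rewrite prod_right_check prod_left_check -/(weyl_op w z).
by rewrite !mulmxA -(mulmxA _ U) (qunitaryV unitU) mulmx1.
Qed.

End SandwichChecks.

Theorem theorem1 (R : rcfType) (n : nat) (Hn : (1 <= n)%N)
  (U : 'M[R[i]]_(2 ^ n)) (HU : qunitary U)
  (rho : 'M[R[i]]_(2 ^ n)) (Hrho : density_matrix rho)
  (K : nat) (E : 'I_K -> 'M[R[i]]_(2 ^ n))
  (HE : \sum_(i < K) adjmx (E i) *m E i = 1%:M) :
  exists m : nat, (1 <= m)%N /\
  exists C1 C2 : 'I_m -> 'M[R[i]]_(2 ^ n),
    (forall k : 'I_m, qunitary (C1 k) /\ qunitary (C2 k) /\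
                      C2 k *m U *m C1 k = U) /\
    (prob_allzero C1 C2 U E rho != 0 ->
     fidelity (postselected_state C1 C2 U E rho) (U *m rho *m adjmx U) = 1).
Proof.
have [w w_prim] := prim_root_exists (R[i]) (exp2n_gt0 n).
exists (n + n); split; first by rewrite addn_gt0 Hn.
exists (left_check w U), (right_check w); split.
  by move=> k; have [? ? ?] := sandwich_checksP w_prim HU k.
move=> p_neq0.
rewrite (postselected_state_scalar_kraus HU Hrho
  (tblk00_kraus_op_sandwich w_prim HU E) p_neq0).
exact: fidelity_refl (density_matrix_conjby HU Hrho).
Qed.
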